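(* Let $X$ be a normed space with norm $\|\cdot\|$ and let $Y_\rho$ be a $\rho$-complete modular space associated with a convex modular $\rho$ satisfying the $\Delta_2$-condition with constant $\tau$ (i.e. $\rho(2u)\le\tau\rho(u)$ for all $u\in Y_\rho$). Let $\theta>0$ and $r>\log_2\!\left(\frac{\tau^3}{2}\right)$ be real numbers, and let $\phi: X\to Y_\rho$ be a mapping such that $$\rho\big(\phi(x+y-z)+\phi(x+z-y)+\phi(y+z-x)-\phi(x-y)-\phi(x-z)-\phi(z-y)-\phi(x)-\phi(y)-\phi(z)\big)\le\theta\left(\|x\|^r+\|y\|^r+\|z\|^r\right)$$ for all $x,y,z\in X$. Then there exists a unique quadratic mapping $h: X\to Y_\rho$ such that $$\rho(\phi(x)-h(x))\le\frac{3\theta\tau^2}{2\left(2^{r+1}-\tau^3\right)}\|x\|^r\quad\text{for all }x\in X.$$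
   Context: A convex modular on a vector space $Y$ is a functional $\rho: Y\to[0,\infty)$ such that for all $u,v\in Y$: (i) $\rho(u)=0$ iff $u=0$; (ii) $\rho(\lambda u)=\rho(u)$ for every scalar $\lambda$ with $|\lambda|=1$; (iii) $\rho(a u+b v)\le a\rho(u)+b\rho(v)$ whenever $a,b\ge 0$ and $a+b=1$. The associated modular space is $Y_\rho=\{u\in Y: \rho(\lambda u)\to 0 \text{ as } \lambda\to 0\}$. $\rho$ satisfies the $\Delta_2$-condition if there is $\tau>0$ with $\rho(2u)\le\tau\rho(u)$ for all $u\in Y_\rho$. A sequence $\{u_n\}$ in $Y_\rho$ is $\rho$-convergent to $u$ if $\rho(u_n-u)\to 0$; it is $\rho$-Cauchy if $\rho(u_n-u_m)\to0$ as $n,m\to\infty$; $Y_\rho$ is $\rho$-complete if every $\rho$-Cauchy sequence is $\rho$-convergent. A mapping $h: X\to Y_\rho$ is quadratic if $h(x+y)+h(x-y)=2h(x)+2h(y)$ for all $x,y\in X$. *)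

From HB Require Import structures.
From mathcomp Require Import all_boot all_order all_algebra.
From mathcomp Require Import all_classical all_reals all_analysis.
Set Implicit Arguments. Unset Strict Implicit. Unset Printing Implicit Defensive.
Import Order.TTheory GRing.Theory Num.Theory.
Import numFieldNormedType.Exports.
Local Open Scope classical_set_scope.
Local Open Scope ring_scope.

Definition convex_modular (R : realType) (Y : lmodType R) (rho : Y -> R) : Prop :=
  [/\ forall u, 0 <= rho u,
      forall u, rho u = 0 <-> u = 0,
      forall (l : R) u, `|l| = 1 -> rho (l *: u) = rho u &
      forall (a b : R) u v, 0 <= a -> 0 <= b -> a + b = 1 ->
        rho (a *: u + b *: v) <= a * rho u + b * rho v].

Definition modular_space (R : realType) (Y : lmodType R) (rho : Y -> R) : set Y :=
  [set u | rho (l *: u) @[l --> (0 : R)] --> (0 : R)].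

Definition delta2 (R : realType) (Y : lmodType R) (rho : Y -> R) (tau : R) : Prop :=
  0 < tau /\ forall u, modular_space rho u -> rho (2 *: u) <= tau * rho u.

Definition rho_cauchy (R : realType) (Y : lmodType R) (rho : Y -> R) (s : nat -> Y) : Prop :=
  forall e : R, 0 < e -> exists N : nat, forall n m : nat, (N <= n)%N -> (N <= m)%N ->
    rho (s n - s m) < e.

Definition rho_converges (R : realType) (Y : lmodType R) (rho : Y -> R) (s : nat -> Y) (u : Y) : Prop :=
  rho (s n - u) @[n --> \oo] --> (0 : R).

Definition rho_complete (R : realType) (Y : lmodType R) (rho : Y -> R) : Prop :=
  forall s : nat -> Y, (forall n, modular_space rho (s n)) -> rho_cauchy rho s ->
    exists2 u, modular_space rho u & rho_converges rho s u.

Definition quadratic (R : realType) (X : lmodType R) (Y : lmodType R) (h : X -> Y) : Prop :=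
  forall x y, h (x + y) + h (x - y) = 2 *: h x + 2 *: h y.

From HB Require Import structures.
From mathcomp Require Import all_boot all_order all_algebra.
From mathcomp Require Import all_classical all_reals all_analysis.
From mathcomp Require Import ring lra.
Import Order.TTheory GRing.Theory Num.Theory.
Import numFieldNormedType.Exports.
Local Open Scope classical_set_scope.
Local Open Scope ring_scope.
Set Implicit Arguments. Unset Strict Implicit. Unset Printing Implicit Defensive.

(* Hyers' direct method.  The inequality at (x, x, 0) and (x, 0, 0) bounds
   phi (2 x) - 4 phi x, and the Delta_2 condition turns this into the estimate
   rho (hyers phi n x - hyers phi (j + n) x) <= M N x (tau^2 / P)^n, so the
   sequence 4^n phi (x / 2^n) is rho-Cauchy; its limit h has zero defect,
   hence is quadratic.  Since rho is only quasi-subadditive,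
   rho (u + v) <= tau/2 (rho u + rho v), the bound M passes to the limit only
   up to a factor tau/2; it is recovered by iterating the contraction
   K |-> c + b K, whose fixed point is M.  Uniqueness follows by rescaling
   x to x / 2^n.  For tau < 2 the modular space is trivial. *)

Section RealFacts.
Variable R : realType.

Lemma ler_addr_cvg0 (a c : R) (f : nat -> R) :
  (forall n, a <= c + f n) -> f n @[n --> \oo] --> 0 -> a <= c.
Proof.
move=> le_acf f0.
have cf : c + f n @[n --> \oo] --> c.
  by rewrite -[X in _ --> X]addr0; apply: cvgD => //; exact: cvg_cst.
rewrite -(cvg_lim _ cf) //; apply: limr_ge; [exact: cvgP cf | exact: nearW].
Qed.

Lemma cvg0_squeeze (T : Type) (F : set_system T) {FF : Filter F} (f g : T -> R) :
  (forall t, 0 <= g t <= f t) -> f t @[t --> F] --> 0 -> g t @[t --> F] --> 0.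
Proof.
move=> gf f0; have gf_near : \forall t \near F, (fun=> (0 : R)) t <= g t <= f t.
  exact: nearW.
exact: (squeeze_cvgr gf_near (cvg_cst (0 : R)) f0).
Qed.

Lemma cvg0_mulrD (k : R) (f g : nat -> R) :
  f n @[n --> \oo] --> 0 -> g n @[n --> \oo] --> 0 -> k * f n + k * g n @[n --> \oo] --> 0.
Proof.
move=> f0 g0; have := cvgD (cvgMl_tmp (a := k) f0) (cvgMl_tmp (a := k) g0).
by rewrite mulr0 addr0; apply.
Qed.

Lemma lt_powR_log (a b r : R) : 0 < a -> 1 < b -> ln a / ln b < r -> a < b `^ r.
Proof.
move=> a_gt0 b_gt1; have lnb_gt0 : 0 < ln b by rewrite ln_gt0.
by rewrite ltr_pdivrMr // -ln_powR -ltr_ln ?posrE ?powR_gt0 // (lt_trans ltr01 b_gt1).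
Qed.

Lemma powRV (a r : R) : 0 < a -> a^-1 `^ r = (a `^ r)^-1.
Proof.
move=> a_gt0; have ar_neq0 : a `^ r != 0 by rewrite gt_eqF ?powR_gt0.
apply: (mulfI ar_neq0); rewrite -powRM ?invr_ge0 ?ltW //.
by rewrite mulfV ?gt_eqF // mulfV // powR1.
Qed.

End RealFacts.

Section ConvexModular.
Variables (R : realType) (Y : lmodType R) (rho : Y -> R).
Hypothesis rho_convex : convex_modular rho.
Local Notation Yrho := (modular_space rho).

Lemma modular_ge0 u : 0 <= rho u. Proof. by case: rho_convex. Qed.

Lemma modular_eq0 u : rho u = 0 <-> u = 0. Proof. by case: rho_convex. Qed.

Lemma modular0 : rho 0 = 0. Proof. exact/modular_eq0. Qed.

Lemma modularN u : rho (- u) = rho u.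
Proof. by case: rho_convex => _ _ rhoZ _; rewrite -scaleN1r rhoZ // normrN normr1. Qed.

Lemma modular_midpoint u v : rho (u + v) <= (rho (2 *: u) + rho (2 *: v)) / 2.
Proof.
have half_ge0 : 0 <= 2^-1 :> R by rewrite invr_ge0.
have halves : 2^-1 + 2^-1 = 1 :> R by rewrite -div1r -splitr.
case: rho_convex => _ _ _ /(_ 2^-1 2^-1 (2 *: u) (2 *: v) half_ge0 half_ge0 halves).
rewrite !scalerA mulVf ?pnatr_eq0 // !scale1r mulrDl !(mulrC 2^-1).
exact.
Qed.

Lemma modular_scale_le s u : 0 <= s <= 1 -> rho (s *: u) <= s * rho u.
Proof.
case/andP=> s_ge0 s_le1; case: rho_convex => _ _ _ /(_ s (1 - s) u 0 s_ge0).
rewrite subr_ge0 scaler0 addr0 modular0 mulr0 addr0 addrC subrK; exact.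
Qed.

Lemma modular_space0 : Yrho 0.
Proof. by rewrite /modular_space /=; under eq_fun do rewrite scaler0 modular0; exact: cvg_cst. Qed.

Lemma modular_spaceZ c u : Yrho u -> Yrho (c *: u).
Proof.
rewrite /modular_space /= => u_mod; under eq_fun do rewrite scalerA.
have lc0 : (fun l : R => l * c) @ (nbhs (0 : R)) --> (0 : R).
  have := @cvgMr_tmp R R (nbhs (0 : R)) _ id 0 c cvg_id; rewrite mul0r; exact.
exact: cvg_comp lc0 u_mod.
Qed.

Lemma modular_spaceN u : Yrho u -> Yrho (- u).
Proof. by rewrite -scaleN1r; apply: modular_spaceZ. Qed.

Lemma modular_spaceD u v : Yrho u -> Yrho v -> Yrho (u + v).
Proof.
move=> /(modular_spaceZ 2) u_mod /(modular_spaceZ 2) v_mod.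
rewrite /modular_space /= in u_mod v_mod *.
have uv0 : (rho (l *: (2 *: u)) + rho (l *: (2 *: v))) / 2 @[l --> (0 : R)] --> (0 : R).
  by have := cvgMr_tmp (b := 2^-1) (cvgD u_mod v_mod); rewrite addr0 mul0r; apply.
apply: (cvg0_squeeze _ uv0) => l.
rewrite modular_ge0 scalerDr !scalerA !(mulrC l) -!scalerA.
exact: modular_midpoint.
Qed.

Section Delta2.
Variable tau : R.
Hypothesis rho_delta2 : delta2 rho tau.

Lemma delta2_gt0 : 0 < tau. Proof. by case: rho_delta2. Qed.

Lemma modular_double_le u : Yrho u -> rho (2 *: u) <= tau * rho u.
Proof. by case: rho_delta2 => _; apply. Qed.

(* By convexity, rho u <= rho (2 u) / 2 <= (tau / 2) rho u. *)
Lemma delta2_lt2_modular_space_eq0 : tau < 2 -> forall u, Yrho u -> u = 0.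
Proof.
move=> tau_lt2 u u_mod; apply/modular_eq0/le_anti; rewrite modular_ge0 andbT.
have half_le1 : 0 <= (2^-1 : R) <= 1.
  by apply/andP; split; [rewrite invr_ge0 | rewrite invf_le1 // ler1n].
have := modular_scale_le (2 *: u) half_le1.
rewrite scalerA mulVf ?pnatr_eq0 // scale1r ler_pdivlMl // => le_2rho.
have := le_trans le_2rho (modular_double_le u_mod).
have := modular_ge0 u; nra.
Qed.

Lemma modular_pow2_le n u : Yrho u -> rho (2 ^+ n *: u) <= tau ^+ n * rho u.
Proof.
move=> u_mod; elim: n => [|n IHn]; first by rewrite !expr0 scale1r mul1r.
rewrite exprS -scalerA (exprS tau) -mulrA.
apply: le_trans (modular_double_le (modular_spaceZ _ u_mod)) _.
by rewrite ler_wpM2l // ltW // delta2_gt0.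
Qed.

Lemma modular_pow4_le n u : Yrho u -> rho (4 ^+ n *: u) <= (tau ^+ 2) ^+ n * rho u.
Proof.
have -> : (4 : R) = 2 ^+ 2 by rewrite expr2 -natrM.
by rewrite -!exprM; apply: modular_pow2_le.
Qed.

Lemma modular_add_le u v : Yrho u -> Yrho v ->
  rho (u + v) <= tau / 2 * rho u + tau / 2 * rho v.
Proof.
move=> u_mod v_mod; apply: le_trans (modular_midpoint u v) _.
have -> : tau / 2 * rho u + tau / 2 * rho v = (tau * rho u + tau * rho v) / 2 by ring.
rewrite ler_wpM2r ?invr_ge0 //.
by apply: lerD; apply: modular_double_le.
Qed.

Lemma modular_add_scale4_le u v : Yrho u -> Yrho v ->
  rho (u + 4 *: v) <= tau / 2 * rho u + tau ^+ 3 / 2 * rho v.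
Proof.
move=> u_mod v_mod; apply: le_trans (modular_midpoint u _) _; rewrite scalerA.
have -> : (2 * 4 : R) = 2 ^+ 3 by rewrite -natrM -natrX.
have -> : tau / 2 * rho u + tau ^+ 3 / 2 * rho v = (tau * rho u + tau ^+ 3 * rho v) / 2.
  by ring.
rewrite ler_wpM2r ?invr_ge0 //.
apply: lerD; [exact: modular_double_le | exact: modular_pow2_le].
Qed.

Lemma rho_converges_opp (s : nat -> Y) u :
  rho_converges rho s u -> rho_converges rho (fun n => - s n) (- u).
Proof. by rewrite /rho_converges /= => su; under eq_fun do rewrite -opprD modularN. Qed.

Lemma rho_converges_add (s t : nat -> Y) u v :
  (forall n, Yrho (s n)) -> (forall n, Yrho (t n)) -> Yrho u -> Yrho v ->
  rho_converges rho s u -> rho_converges rho t v ->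
  rho_converges rho (fun n => s n + t n) (u + v).
Proof.
move=> s_mod t_mod u_mod v_mod su tv.
apply: (@cvg0_squeeze _ _ _ _ (fun n => tau / 2 * rho (s n - u) + tau / 2 * rho (t n - v))).
  move=> n; rewrite modular_ge0 opprD addrACA.
  by apply: modular_add_le; apply: modular_spaceD => //; apply: modular_spaceN.
exact: cvg0_mulrD.
Qed.

Lemma rho_converges_sub (s t : nat -> Y) u v :
  (forall n, Yrho (s n)) -> (forall n, Yrho (t n)) -> Yrho u -> Yrho v ->
  rho_converges rho s u -> rho_converges rho t v ->
  rho_converges rho (fun n => s n - t n) (u - v).
Proof.
move=> s_mod t_mod u_mod v_mod su tv.
apply: rho_converges_add => //; [|exact: modular_spaceN|exact: rho_converges_opp].
by move=> n; apply: modular_spaceN.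
Qed.

Lemma rho_converges_unique (s : nat -> Y) u v :
  (forall n, Yrho (s n)) -> Yrho u -> Yrho v ->
  rho_converges rho s u -> rho_converges rho s v -> u = v.
Proof.
move=> s_mod u_mod v_mod su sv; apply/eqP; rewrite -subr_eq0; apply/eqP/modular_eq0.
apply/le_anti; rewrite modular_ge0 andbT.
apply: (ler_addr_cvg0 _ (cvg0_mulrD (tau / 2) su sv)) => n; rewrite add0r.
have -> : u - v = - (s n - u) + (s n - v) by rewrite opprB addrA subrK.
have sBu_mod w : Yrho w -> Yrho (s n - w) by move=> w_mod; apply/modular_spaceD/modular_spaceN.
rewrite -(modularN (s n - u)).
by apply: modular_add_le; [apply/modular_spaceN/sBu_mod | apply: sBu_mod].
Qed.

End Delta2.
End ConvexModular.

Definition defect (R : realType) (X Y : lmodType R) (f : X -> Y) (x y z : X) : Y :=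
  f (x + y - z) + f (x + z - y) + f (y + z - x)
  - f (x - y) - f (x - z) - f (z - y) - f x - f y - f z.

Definition hyers (R : realType) (X Y : lmodType R) (f : X -> Y) (n : nat) (x : X) : Y :=
  4 ^+ n *: f (2 ^- n *: x).

Section Defect.
Variables (R : realType) (X Y : lmodType R).
Implicit Types (f g : X -> Y) (x y z : X).

Lemma defect_eq0_at0 f : defect f 0 0 0 = 0 -> f 0 = 0.
Proof.
rewrite /defect !subr0 !addr0 !addrK subrr sub0r -!opprD => /eqP.
by rewrite oppr_eq0 -mulr2n -mulrSr -scaler_nat scaler_eq0 pnatr_eq0 => /eqP.
Qed.

Lemma defect_double f x : f 0 = 0 -> f (x + x) - 4 *: f x = defect f x x 0 + defect f x 0 0.
Proof.
move=> f0; rewrite /defect !subr0 !addr0 !sub0r subrr f0 !subr0 !addr0.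
rewrite (addrAC (f x) (f x)) addrK (addrC (f x)) addrK -!addrA; congr (_ + _).
rewrite [- f (- x) + _]addrCA [- f (- x) + _]addrCA addKr -!opprD; congr (- _).
by rewrite scaler_nat !mulrS mulr0n addr0.
Qed.

Lemma defect_eq0_quadratic f : (forall x y z, defect f x y z = 0) -> quadratic f.
Proof.
move=> f_defect0; have f0 := defect_eq0_at0 (f_defect0 0 0 0).
have f_even x : f (- x) = f x.
  have := f_defect0 x 0 0; rewrite /defect !subr0 !addr0 sub0r f0 !subr0.
  by rewrite (addrAC (f x)) addrK (addrC (f x)) addrK => /eqP; rewrite subr_eq0 => /eqP.
move=> x y; have := f_defect0 x y 0.
rewrite /defect !subr0 !addr0 sub0r f0 subr0 f_even -[y - x]opprB f_even addrK.
move=> /eqP; rewrite !subr_eq add0r => /eqP ->.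
by rewrite !scaler_nat !mulr2n -addrA addrACA addrC.
Qed.

Lemma defect_hyers f n x y z :
  defect (hyers f n) x y z = 4 ^+ n *: defect f (2 ^- n *: x) (2 ^- n *: y) (2 ^- n *: z).
Proof. by rewrite /defect /hyers !scalerDr !scalerN. Qed.

Lemma hyers0 f x : hyers f 0 x = f x.
Proof. by rewrite /hyers !expr0 invr1 !scale1r. Qed.

Lemma hyers_add f j n x : hyers f (j + n) x = 4 ^+ n *: hyers f j (2 ^- n *: x).
Proof. by rewrite /hyers !exprD !invfM !scalerA (mulrC (4 ^+ n)). Qed.

Lemma hyersS f n x : hyers f n.+1 x = 4 *: hyers f n (2^-1 *: x).
Proof. by rewrite -addn1 hyers_add !expr1. Qed.

Lemma halfZD x : 2^-1 *: x + 2^-1 *: x = x.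
Proof. by rewrite -scalerDl -[2^-1]div1r -splitr scale1r. Qed.

Lemma quadratic0 g : quadratic g -> g 0 = 0.
Proof.
move=> g_quad; have := g_quad 0 0; rewrite addr0 subr0 !scaler_nat !mulr2n.
rewrite -{1}(addr0 (g 0 + g 0)) => /addrI /esym /eqP.
by rewrite -mulr2n -scaler_nat scaler_eq0 pnatr_eq0 => /eqP.
Qed.

Lemma quadratic_double g x : quadratic g -> g (x + x) = 4 *: g x.
Proof.
move=> g_quad; have := g_quad x x; rewrite subrr quadratic0 // addr0 => ->.
by rewrite -scalerDl -natrD.
Qed.

Lemma quadratic_halving g x : quadratic g -> g x = 4 *: g (2^-1 *: x).
Proof. by move=> g_quad; rewrite -quadratic_double // halfZD. Qed.

Lemma quadratic_halvingn g n x : quadratic g -> g x = 4 ^+ n *: g (2 ^- n *: x).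
Proof.
move=> g_quad; elim: n => [|n IHn]; first by rewrite expr0 invr1 !scale1r.
by rewrite IHn (quadratic_halving _ g_quad) !scalerA -exprSr [2 ^+ n.+1]exprS invfM.
Qed.

End Defect.

Section Stability.
Variables (R : realType) (X Y : lmodType R) (rho : Y -> R) (tau P theta : R).
Variables (N : X -> R) (phi : X -> Y).
Hypotheses (rho_convex : convex_modular rho) (rho_delta2 : delta2 rho tau).
Hypotheses (tau_ge2 : 2 <= tau) (tau3_lt2P : tau ^+ 3 < 2 * P) (theta_ge0 : 0 <= theta).
(* N is a control function homogeneous of degree log2 P; the corollary uses
   N x = `|x| `^ r and P = 2 `^ r. *)
Hypotheses (N_ge0 : forall x, 0 <= N x) (N_half : forall x, N (2^-1 *: x) = N x / P).
Local Notation Yrho := (modular_space rho).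
Hypothesis phi_mod : forall x, Yrho (phi x).
Hypothesis phi_defect_le :
  forall x y z, rho (defect phi x y z) <= theta * (N x + N y + N z).

Ltac modular_closure := repeat first
  [ apply: (modular_spaceD rho_convex) | apply: modular_spaceN
  | apply: modular_spaceZ | solve [auto] ].

Let c := 3 * tau ^+ 2 * theta / (4 * P).
Let b := tau ^+ 3 / (2 * P).
Let q := tau ^+ 2 / P.
Let M := 3 * theta * tau ^+ 2 / (2 * (2 * P - tau ^+ 3)).

Lemma tau_ge0 : 0 <= tau. Proof. by apply: le_trans tau_ge2. Qed.

Lemma tau3_ge8 : 8 <= tau ^+ 3.
Proof.
have -> : 8 = 2 ^+ 3 :> R by rewrite -natrX.
by rewrite lerXn2r ?nnegrE ?tau_ge0.
Qed.

Lemma P_gt1 : 1 < P.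
Proof.
rewrite -(ltr_pM2l (ltr0Sn R 1)) mulr1; apply: le_lt_trans tau3_lt2P.
by apply: le_trans tau3_ge8; rewrite ler_nat.
Qed.

Lemma P_gt0 : 0 < P. Proof. exact: lt_trans ltr01 P_gt1. Qed.

Lemma den_gt0 : 0 < 2 * P - tau ^+ 3. Proof. by rewrite subr_gt0. Qed.

Lemma q_ge0 : 0 <= q.
Proof. by rewrite divr_ge0 ?sqr_ge0 ?(ltW P_gt0). Qed.

Lemma q_norm_lt1 : `|q| < 1.
Proof.
rewrite ger0_norm ?q_ge0 // ltr_pdivrMr ?mul1r ?P_gt0 // -(ltr_pM2l (ltr0Sn R 1)).
apply: le_lt_trans tau3_lt2P; rewrite mulrC [tau ^+ 3]exprSr ler_wpM2l ?sqr_ge0 //.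
Qed.

Lemma M_ge0 : 0 <= M.
Proof.
by apply: divr_ge0; rewrite !mulr_ge0 ?exprn_ge0 ?tau_ge0 ?(ltW den_gt0).
Qed.

Lemma M_fixed : c + b * M = M.
Proof. by rewrite /c /b /M; field; rewrite !lt0r_neq0 ?P_gt0 ?den_gt0. Qed.

Lemma N0 : N 0 = 0.
Proof.
have := N_half 0; rewrite scaler0 => /eqP; rewrite -subr_eq0 -{1}(mulr1 (N 0)) -mulrBr.
by rewrite mulf_eq0 subr_eq0 [1 == _]eq_sym invr_eq1 (gt_eqF P_gt1) orbF => /eqP.
Qed.

Lemma N_halvingn n x : N (2 ^- n *: x) = N x / P ^+ n.
Proof.
elim: n => [|n IHn]; first by rewrite !expr0 invr1 scale1r mulr1.
by rewrite exprS invfM -scalerA N_half IHn exprS invfM mulrA mulrAC.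
Qed.

Lemma phi0 : phi 0 = 0.
Proof.
apply: defect_eq0_at0; apply/(modular_eq0 rho_convex)/le_anti.
by rewrite modular_ge0 // andbT (le_trans (phi_defect_le 0 0 0)) // N0 !addr0 mulr0.
Qed.

Lemma phi_double_le x : rho (phi (x + x) - 4 *: phi x) <= 3 * tau / 2 * theta * N x.
Proof.
rewrite defect_double ?phi0 //.
have -> : 3 * tau / 2 * theta * N x =
    tau / 2 * (theta * (N x + N x + N 0)) + tau / 2 * (theta * (N x + N 0 + N 0)).
  by rewrite N0 !addr0; ring.
apply: le_trans (modular_add_le rho_convex rho_delta2 _ _) _; [rewrite /defect; modular_closure..|].
by apply: lerD; apply: ler_wpM2l; rewrite ?divr_ge0 ?tau_ge0.
Qed.

Lemma approx_halving_le (g : X -> Y) K :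
    (forall x, Yrho (g x)) -> (forall x, rho (phi x - g x) <= K * N x) ->
  forall x, rho (phi x - 4 *: g (2^-1 *: x)) <= (c + b * K) * N x.
Proof.
move=> g_mod g_approx x; set y := 2^-1 *: x.
have -> : phi x - 4 *: g y = (phi (y + y) - 4 *: phi y) + 4 *: (phi y - g y).
  by rewrite halfZD scalerBr addrA subrK.
have -> : (c + b * K) * N x = tau / 2 * (3 * tau / 2 * theta * N y) + tau ^+ 3 / 2 * (K * N y).
  by rewrite /y N_half /c /b; field; rewrite lt0r_neq0 ?P_gt0.
apply: le_trans (modular_add_scale4_le rho_convex rho_delta2 _ _) _; [modular_closure..|].
apply: lerD; apply: ler_wpM2l; rewrite ?divr_ge0 ?exprn_ge0 ?tau_ge0 //.
exact: phi_double_le.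
Qed.

Lemma hyers_mod n x : Yrho (hyers phi n x).
Proof. by rewrite /hyers; modular_closure. Qed.

Lemma hyers_approx n x : rho (phi x - hyers phi n x) <= M * N x.
Proof.
elim: n x => [|n IHn] x.
  by rewrite hyers0 subrr modular0 // mulr_ge0 ?M_ge0.
by rewrite hyersS -M_fixed; apply: approx_halving_le => // ?; apply: hyers_mod.
Qed.

Lemma hyers_dist_le n j x :
  rho (hyers phi n x - hyers phi (j + n) x) <= M * N x * q ^+ n.
Proof.
rewrite hyers_add [hyers phi n x]/hyers -scalerBr.
apply: le_trans (modular_pow4_le rho_delta2 n _) _; first by modular_closure; exact: hyers_mod.
have -> : M * N x * q ^+ n = (tau ^+ 2) ^+ n * (M * N (2 ^- n *: x)).
  by rewrite N_halvingn /q expr_div_n; field; rewrite expf_neq0 // lt0r_neq0 ?P_gt0.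
by rewrite ler_wpM2l ?hyers_approx // exprn_ge0 // sqr_ge0.
Qed.

Lemma hyers_cauchy x : rho_cauchy rho (hyers phi ^~ x).
Proof.
move=> e e_gt0.
have [n0 _ geo_lt] := (cvgrPdist_lt _ _).1 (cvg_geometric (M * N x) q_norm_lt1) e e_gt0.
have dist_lt k j : (n0 <= k)%N -> rho (hyers phi k x - hyers phi (j + k) x) < e.
  move=> k_ge; apply: le_lt_trans (hyers_dist_le k j x) _.
  have := geo_lt k k_ge; rewrite /= sub0r normrN ger0_norm //.
  by rewrite mulr_ge0 ?exprn_ge0 ?q_ge0 // mulr_ge0 ?M_ge0.
exists n0 => n m n_ge m_ge; case: (leqP n m) => [le_nm | /ltnW le_mn].
  by rewrite -(subnK le_nm); apply: dist_lt.
by rewrite -modularN // opprB -(subnK le_mn); apply: dist_lt.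
Qed.

Lemma rho_defect_hyers_cvg0 x y z :
  rho_converges rho (fun n => defect (hyers phi n) x y z) 0.
Proof.
rewrite /rho_converges; under eq_fun do rewrite subr0.
apply: (cvg0_squeeze _ (cvg_geometric (theta * (N x + N y + N z)) q_norm_lt1)) => n.
rewrite modular_ge0 //= defect_hyers.
apply: le_trans (modular_pow4_le rho_delta2 n _) _; first by rewrite /defect; modular_closure.
have -> : theta * (N x + N y + N z) * q ^+ n = (tau ^+ 2) ^+ n *
    (theta * (N (2 ^- n *: x) + N (2 ^- n *: y) + N (2 ^- n *: z))).
  by rewrite !N_halvingn /q expr_div_n; field; rewrite expf_neq0 // lt0r_neq0 ?P_gt0.
by rewrite ler_wpM2l ?phi_defect_le // exprn_ge0 // sqr_ge0.
Qed.

Lemma rho_converges_defect (f : nat -> X -> Y) (g : X -> Y) x y z :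
    (forall n w, Yrho (f n w)) -> (forall w, Yrho (g w)) ->
    (forall w, rho_converges rho (f ^~ w) (g w)) ->
  rho_converges rho (fun n => defect (f n) x y z) (defect g x y z).
Proof.
move=> f_mod g_mod fg; rewrite /defect.
by repeat first
  [ apply: (rho_converges_sub rho_convex rho_delta2)
  | apply: (rho_converges_add rho_convex rho_delta2)
  | exact: fg | solve [modular_closure] | move=> n; solve [modular_closure] ].
Qed.

Lemma b_norm_lt1 : `|b| < 1.
Proof.
have twoP_gt0 : 0 < 2 * P by rewrite mulr_gt0 ?P_gt0.
by rewrite ger0_norm ?divr_ge0 ?exprn_ge0 ?tau_ge0 ?(ltW twoP_gt0) // ltr_pdivrMr ?mul1r.
Qed.

Lemma quadratic_approx_sharpen (g : X -> Y) K :
    (forall x, Yrho (g x)) -> quadratic g -> (forall x, rho (phi x - g x) <= K * N x) ->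
  forall x, rho (phi x - g x) <= M * N x.
Proof.
move=> g_mod g_quad g_approx.
have approx_iter k x : rho (phi x - g x) <= (M + b ^+ k * (K - M)) * N x.
  elim: k x => [|k IHk] x; first by rewrite expr0 mul1r [M + _]addrC subrK.
  have -> : M + b ^+ k.+1 * (K - M) = c + b * (M + b ^+ k * (K - M)).
    by rewrite -{1}M_fixed exprS; ring.
  by rewrite {1}(quadratic_halving x g_quad); apply: approx_halving_le.
move=> x; apply: (ler_addr_cvg0 _ (cvg_geometric ((K - M) * N x) b_norm_lt1)) => k.
have -> : M * N x + geometric ((K - M) * N x) b k = (M + b ^+ k * (K - M)) * N x.
  by rewrite /geometric /=; ring.
exact: approx_iter.
Qed.

Lemma quadratic_approx_unique (g g' : X -> Y) :
    (forall x, Yrho (g x)) -> (forall x, Yrho (g' x)) -> quadratic g -> quadratic g' ->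
    (forall x, rho (phi x - g x) <= M * N x) -> (forall x, rho (phi x - g' x) <= M * N x) ->
  g = g'.
Proof.
move=> g_mod g'_mod g_quad g'_quad g_approx g'_approx; apply: funext => x.
apply/eqP; rewrite -subr_eq0; apply/eqP/(modular_eq0 rho_convex)/le_anti.
rewrite modular_ge0 // andbT.
apply: (ler_addr_cvg0 _ (cvg_geometric (tau * M * N x) q_norm_lt1)) => n.
rewrite add0r (quadratic_halvingn n x g_quad) (quadratic_halvingn n x g'_quad) -scalerBr.
set y := 2 ^- n *: x.
apply: le_trans (modular_pow4_le rho_delta2 n _) _; first by modular_closure.
have -> : g y - g' y = - (phi y - g y) + (phi y - g' y) by rewrite opprB addrA subrK.
have -> : tau * M * N x * q ^+ n =
    (tau ^+ 2) ^+ n * (tau / 2 * (M * N y) + tau / 2 * (M * N y)).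
  by rewrite /y N_halvingn /q expr_div_n; field; rewrite expf_neq0 // lt0r_neq0 ?P_gt0.
rewrite ler_wpM2l ?exprn_ge0 ?sqr_ge0 ?tau_ge0 //.
apply: le_trans (modular_add_le rho_convex rho_delta2 _ _) _; [modular_closure..|].
by rewrite modularN //; apply: lerD; apply: ler_wpM2l; rewrite ?divr_ge0 ?tau_ge0.
Qed.

Section HyersLimit.
Variable h : X -> Y.
Hypothesis h_mod : forall x, Yrho (h x).
Hypothesis hyers_cvg : forall x, rho_converges rho (hyers phi ^~ x) (h x).

Lemma hyers_limit_quadratic : quadratic h.
Proof.
apply: defect_eq0_quadratic => x y z.
apply: (rho_converges_unique rho_convex rho_delta2 _ _ (modular_space0 rho_convex)
  (rho_converges_defect x y z _ _ hyers_cvg) (rho_defect_hyers_cvg0 x y z)).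
- by move=> n; rewrite /defect; modular_closure; exact: hyers_mod.
- by rewrite /defect; modular_closure.
- by move=> n w; exact: hyers_mod.
- exact: h_mod.
Qed.

Lemma hyers_limit_approx x : rho (phi x - h x) <= M * N x.
Proof.
apply: (quadratic_approx_sharpen h_mod hyers_limit_quadratic (K := tau / 2 * M)) => {}x.
have hyers_cvg0 : tau / 2 * rho (hyers phi n x - h x) @[n --> \oo] --> 0.
  by have := cvgMl_tmp (a := tau / 2) (hyers_cvg x); rewrite mulr0; apply.
apply: (ler_addr_cvg0 _ hyers_cvg0) => n.
have -> : phi x - h x = (phi x - hyers phi n x) + (hyers phi n x - h x) by rewrite addrA subrK.
apply: le_trans (modular_add_le rho_convex rho_delta2 _ _) _.
- by modular_closure; exact: hyers_mod.
- by modular_closure; exact: hyers_mod.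
by rewrite -[tau / 2 * M * N x]mulrA lerD2r ler_wpM2l ?hyers_approx // divr_ge0 ?tau_ge0.
Qed.

End HyersLimit.

Theorem quadratic_stability : rho_complete rho ->
  exists! h : X -> Y, [/\ forall x, Yrho (h x), quadratic h &
    forall x, rho (phi x - h x) <= M * N x].
Proof.
move=> rho_compl.
have hyers_lim x : exists u, Yrho u /\ rho_converges rho (hyers phi ^~ x) u.
  by have [u u_mod hu] := rho_compl _ (hyers_mod ^~ x) (hyers_cauchy x); exists u.
have [h h_lim] := choice hyers_lim.
have h_mod x := (h_lim x).1; have h_cvg x := (h_lim x).2.
have h_quad := hyers_limit_quadratic h_mod h_cvg.
have h_approx := hyers_limit_approx h_mod h_cvg.
exists h; split=> // g [g_mod g_quad g_approx].
exact: quadratic_approx_unique.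
Qed.

End Stability.

Theorem corollary3p2 (R : realType) (X : normedModType R) (Y : lmodType R)
    (rho : Y -> R) (tau theta r : R) (phi : X -> Y) :
  convex_modular rho -> rho_complete rho -> delta2 rho tau ->
  0 < theta -> ln (tau ^+ 3 / 2) / ln 2 < r ->
  (forall x, modular_space rho (phi x)) ->
  (forall x y z : X,
      rho (phi (x + y - z) + phi (x + z - y) + phi (y + z - x)
           - phi (x - y) - phi (x - z) - phi (z - y)
           - phi x - phi y - phi z)
      <= theta * (`|x| `^ r + `|y| `^ r + `|z| `^ r)) ->
  exists! h : X -> Y,
    [/\ forall x, modular_space rho (h x),
        quadratic h &
        forall x, rho (phi x - h x)
          <= 3 * theta * tau ^+ 2 / (2 * (2 `^ (r + 1) - tau ^+ 3)) * `|x| `^ r].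
Proof.
move=> rho_convex rho_compl rho_delta2 theta_gt0 r_gt phi_mod phi_defect_le.
have tau_gt0 := delta2_gt0 rho_delta2.
have tau3_lt2P : tau ^+ 3 < 2 * 2 `^ r.
  rewrite mulrC -ltr_pdivrMr //; apply: (lt_powR_log _ _ r_gt).
  - by rewrite divr_gt0 ?exprn_gt0.
  - by rewrite ltr1n.
have -> : 2 `^ (r + 1) = 2 * 2 `^ r.
  by rewrite powRD ?pnatr_eq0 ?implybT // powRr1 // mulrC.
have [tau_lt2 | tau_ge2] := ltP tau 2.
  have mod_eq0 := delta2_lt2_modular_space_eq0 rho_convex rho_delta2 tau_lt2.
  exists (fun=> 0); split.
    split=> [x | x y | x]; first exact: modular_space0.
      by rewrite !scaler0 addr0.
    rewrite (mod_eq0 _ (phi_mod x)) subrr modular0 // mulr_ge0 ?powR_ge0 //.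
    apply: divr_ge0; last by rewrite mulr_ge0 // subr_ge0 ltW.
    by rewrite !mulr_ge0 ?exprn_ge0 ?(ltW theta_gt0) ?(ltW tau_gt0).
  by move=> h [h_mod _ _]; apply: funext => x; rewrite (mod_eq0 _ (h_mod x)).
apply: (quadratic_stability (N := fun x => `|x| `^ r)) => //.
- exact: ltW.
- move=> x; rewrite normrZ ger0_norm ?invr_ge0 // powRM ?invr_ge0 //.
  by rewrite powRV // mulrC.
Qed.
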